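(* Let $U_1,U_2,\dots$ be i.i.d. almost surely positive random variables distributed as $U$ with tail function $Q(x)=\mathbb{P}(U>x)$, and assume $\mathbb{E}[U^2]<\infty$ and that there exist $\beta\in(0,1/2)$ and $x_0>0$ in the interior of the support of $U$ such that $Q^{1/2-\beta}$ is convex on $[x_0,\infty)$. Let $V_N=\max(U_1,\dots,U_N)$. Then there exists a non-increasing deterministic function $\eta$ on $\mathbb{R}_+$ with $\lim_{y\to+\infty}\eta(y)=0$ such that $\lim_{N\to\infty}\mathbb{P}(B_N)=1$, where $B_N=\{V_N/\sqrt N\le \eta(N)\}$. *)

From HB Require Import structures.
From mathcomp Require Import all_boot all_order all_algebra.
From mathcomp Require Import all_classical all_reals all_analysis.
Set Implicit Arguments. Unset Strict Implicit. Unset Printing Implicit Defensive.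
Import Order.TTheory GRing.Theory Num.Theory.
Import numFieldNormedType.Exports.
Local Open Scope classical_set_scope.
Local Open Scope ring_scope.

Definition mutually_independent d (T : measurableType d) (R : realType)
  (P : probability T R) (X : nat -> {RV P >-> R}) : Prop :=
  forall (I : seq nat) (B : nat -> set R),
    uniq I -> (forall i, measurable (B i)) ->
    P (\bigcap_(i in [set j | j \in I]) (X i @^-1` B i)) =
    (\prod_(i <- I) P (X i @^-1` B i))%E.

Definition same_distribution d (T : measurableType d) (R : realType)
  (P : probability T R) (X Y : {RV P >-> R}) : Prop :=
  forall B : set R, measurable B -> P (Y @^-1` B) = P (X @^-1` B).

Definition tailQ d (T : measurableType d) (R : realType)
  (P : probability T R) (U : {RV P >-> R}) (x : R) : R :=
  fine (P [set t | x < U t]).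

Definition support_of d (T : measurableType d) (R : realType)
  (P : probability T R) (U : {RV P >-> R}) : set R :=
  [set x : R | forall e : R, 0 < e ->
     (0 < P (U @^-1` [set y : R | (`|y - x| < e)%R]))%E].

Definition convex_on (R : realType) (D : set R) (f : R -> R) : Prop :=
  forall x y t, D x -> D y -> 0 <= t <= 1 ->
    f (t * x + (1 - t) * y) <= t * f x + (1 - t) * f y.

(* V_N = max(U_1, ..., U_N) (indices shifted to start at 0) *)
Definition maxN d (T : measurableType d) (R : realType)
  (P : probability T R) (Us : nat -> {RV P >-> R}) (N : nat) (t : T) : R :=
  \big[Order.max/0]_(i < N) Us i t.

From HB Require Import structures.
From mathcomp Require Import all_boot all_order all_algebra.
From mathcomp Require Import all_classical all_reals all_analysis.
From mathcomp Require Import measurable_realfun ring.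
Set Implicit Arguments. Unset Strict Implicit. Unset Printing Implicit Defensive.
Import Order.TTheory GRing.Theory Num.Theory.
Import numFieldNormedType.Exports.
Local Open Scope classical_set_scope.
Local Open Scope ring_scope.

(* Put h(x) := E[U^2; U > x], which tends to 0 as x -> +oo since E[U^2] < oo.
   By the union bound and Markov's inequality restricted to the tail,
   P(V_N > c) <= N P(U > c) <= N h(c) / c^2.  Take q := N^(1/4) and
   eta(N) := h(q)^(1/4) + 1/q: then c := eta(N) sqrt N >= q, so h(c) <= h(q),
   and eta(N)^2 >= h(q)^(1/2), whence P(V_N > c) <= h(q) / eta(N)^2 <= h(q)^(1/2),
   which tends to 0. *)

Lemma measurable_gt_fun d (T : measurableType d) (R : realType) (f : T -> R) x :
  measurable_fun setT f -> measurable [set t | x < f t].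
Proof.
by move=> mf; rewrite -preimage_itvoy -[X in measurable X]setTI; exact: mf.
Qed.

Section tail_sqr_integral.
Context d (T : measurableType d) (R : realType) (mu : {measure set T -> \bar R}).
Context (f : T -> R).
Hypothesis mf : measurable_fun setT f.

Let measurable_gt x : measurable [set t | x < f t].
Proof. exact: measurable_gt_fun. Qed.

Let measurable_sqr (D : set T) : measurable_fun D (fun t => (f t ^+ 2)%:E).
Proof.
by apply/measurable_EFinP; apply: measurable_funX; exact: measurable_funTS.
Qed.

Definition tail_sqr_integral (x : R) : \bar R :=
  \int[mu]_(t in [set t | x < f t]) (f t ^+ 2)%:E.

Lemma tail_sqr_integral_ge0 x : (0 <= tail_sqr_integral x)%E.
Proof. by apply: integral_ge0 => t _; rewrite lee_fin sqr_ge0. Qed.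

Lemma le_tail_sqr_integral (x y : R) :
  x <= y -> (tail_sqr_integral y <= tail_sqr_integral x)%E.
Proof.
move=> xy; apply: ge0_subset_integral => //.
- by move=> t _; rewrite lee_fin sqr_ge0.
- by move=> t /=; apply: le_lt_trans.
Qed.

Lemma tail_sqr_integral_le_integral x :
  (tail_sqr_integral x <= \int[mu]_t (f t ^+ 2)%:E)%E.
Proof.
by apply: ge0_subset_integral => // t _; rewrite lee_fin sqr_ge0.
Qed.

Lemma tail_sqr_integral_markov (x : R) : 0 <= x ->
  ((x ^+ 2)%:E * mu [set t | (x < f t)%R] <= tail_sqr_integral x)%E.
Proof.
move=> x0; rewrite -integral_cst //; apply: ge0_le_integral => //.
- by move=> t _; rewrite lee_fin sqr_ge0.
- move=> t /= xf; rewrite lee_fin lerXn2r ?nnegrE ?(ltW xf) //.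
  exact: le_trans x0 (ltW xf).
Qed.

Section finite_second_moment.
Hypothesis fin_sqr : (\int[mu]_t (f t ^+ 2)%:E < +oo)%E.

Lemma tail_sqr_integral_fin_num x : tail_sqr_integral x \is a fin_num.
Proof.
rewrite ge0_fin_numE ?tail_sqr_integral_ge0 //.
exact: le_lt_trans (tail_sqr_integral_le_integral x) fin_sqr.
Qed.

Lemma tail_sqr_integral_cvg0 : tail_sqr_integral n%:R @[n --> \oo] --> 0%E.
Proof.
pose g t := (f t ^+ 2)%:E; pose g_ (n : nat) := g \_ [set t | n%:R < f t].
have -> : (fun n : nat => tail_sqr_integral n%:R) =
    (fun n => \int[mu]_(t in setT) g_ n t)%E.
  by apply/funext => n; rewrite /tail_sqr_integral integral_mkcond.
have g_ge0 t : (0 <= g t)%E by rewrite lee_fin sqr_ge0.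
have [] := @dominated_convergence _ _ _ mu setT measurableT g_ (cst 0%E) g.
- by move=> n; apply/(measurable_restrictT _ (measurable_gt _)).
- exact: measurable_cst.
- apply: aeW => t _; apply: cvg_near_cst.
  exists (Num.truncn (f t)).+1 => // n /= ftn; rewrite /g_ patchE ifF //.
  apply/negbTE/negP; rewrite in_setE /=; apply/negP; rewrite -leNgt ltW //.
  by apply: lt_le_trans (truncnS_gt (f t)) _; rewrite ler_nat.
- apply/integrableP; split => //.
  by under eq_integral => t _ do rewrite gee0_abs //.
- apply: aeW => t n _; rewrite /g_ patchE; case: ifP => _.
  + by rewrite gee0_abs.
  + by rewrite abse0.
- by move=> _ _; rewrite integral0.
Qed.

Definition tail_sqr_moment x : R := fine (tail_sqr_integral x).

Lemma tail_sqr_moment_ge0 x : 0 <= tail_sqr_moment x.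
Proof. exact/fine_ge0/tail_sqr_integral_ge0. Qed.

Lemma le_tail_sqr_moment (x y : R) :
  x <= y -> tail_sqr_moment y <= tail_sqr_moment x.
Proof.
move=> xy; apply: fine_le; rewrite ?tail_sqr_integral_fin_num //.
exact: le_tail_sqr_integral.
Qed.

Lemma tail_sqr_moment_cvg0 : tail_sqr_moment x @[x --> +oo] --> 0.
Proof.
have /fine_cvgP[_ /cvgr0Pnorm_lt small] := tail_sqr_integral_cvg0.
apply/cvgr0Pnorm_lt => e e0; have [N _ /(_ N (leqnn N)) /= hN] := small e e0.
exists N%:R; split; first exact: num_real.
move=> x /ltW Nx; rewrite ger0_norm ?tail_sqr_moment_ge0 //.
rewrite ger0_norm ?tail_sqr_moment_ge0 // in hN.
exact: le_lt_trans (le_tail_sqr_moment Nx) hN.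
Qed.

Lemma tail_sqr_moment_markov x : 0 <= x ->
  mu [set t | (x < f t)%R] \is a fin_num ->
  x ^+ 2 * fine (mu [set t | (x < f t)%R]) <= tail_sqr_moment x.
Proof.
move=> x0 fin_mu; rewrite -lee_fin EFinM fineK // /tail_sqr_moment.
by rewrite fineK ?tail_sqr_integral_fin_num ?tail_sqr_integral_markov.
Qed.

End finite_second_moment.
End tail_sqr_integral.

Section quarter_root.
Context (R : rcfType).

Definition quarter_root (y : R) : R := Num.sqrt (Num.sqrt (Num.max y 1)).

Lemma quarter_root_ge1 y : 1 <= quarter_root y.
Proof.
have y1 : 1 <= Num.max y 1 by rewrite le_max lexx orbT.
have sy1 : 1 <= Num.sqrt (Num.max y 1).
  by rewrite -[leLHS]sqrtr1 ler_sqrt ?(le_trans ler01 y1).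
by rewrite -[leLHS]sqrtr1 ler_sqrt ?(le_trans ler01 sy1).
Qed.

Lemma quarter_root_gt0 y : 0 < quarter_root y.
Proof. exact: lt_le_trans ltr01 (quarter_root_ge1 y). Qed.

Lemma le_quarter_root x y : x <= y -> quarter_root x <= quarter_root y.
Proof.
move=> xy; rewrite /quarter_root ler_sqrt ?sqrtr_ge0 // ler_sqrt.
  by rewrite ge_max !le_max xy lexx !orbT.
by rewrite le_max ler01 orbT.
Qed.

Lemma le_quarter_root_pow4 z y : 0 <= z -> z ^+ 4 <= y -> z <= quarter_root y.
Proof.
move=> z0 zy; have -> : z = Num.sqrt (Num.sqrt (z ^+ 4)).
  by rewrite (exprM z 2 2) sqrtr_sqr ger0_norm ?sqr_ge0 // sqrtr_sqr ger0_norm.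
rewrite /quarter_root ler_sqrt ?sqrtr_ge0 // ler_sqrt.
  by rewrite le_max zy.
by rewrite le_max ler01 orbT.
Qed.

Lemma sqr_quarter_root y : 1 <= y -> quarter_root y ^+ 2 = Num.sqrt y.
Proof.
move=> y1; rewrite /quarter_root sqr_sqrtr ?sqrtr_ge0 //.
by congr Num.sqrt; apply/max_idPl.
Qed.

Lemma div_le_sqrt (h e : R) :
  0 <= h -> 0 < e -> Num.sqrt h <= e -> h / e <= Num.sqrt h.
Proof.
move=> h0 e0 he; rewrite ler_pdivrMr // -{1}(sqr_sqrtr h0) expr2.
by rewrite ler_wpM2l ?sqrtr_ge0.
Qed.

End quarter_root.

Lemma quarter_root_cvgy (R : realType) :
  @quarter_root R y @[y --> +oo] --> +oo.
Proof.
apply/cvgryPge => A; near=> y; apply: (@le_trans _ _ (Num.max A 0)).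
  by rewrite le_max lexx.
apply: le_quarter_root_pow4; first by rewrite le_max lexx orbT.
by near: y; apply: nbhs_pinfty_ge; exact: num_real.
Unshelve. all: by end_near. Qed.

Section threshold.
Context d (T : measurableType d) (R : realType) (mu : {measure set T -> \bar R}).
Context (f : T -> R).
Hypothesis mf : measurable_fun setT f.
Hypothesis fin_sqr : (\int[mu]_t (f t ^+ 2)%:E < +oo)%E.

Definition threshold (y : R) : R :=
  Num.sqrt (Num.sqrt (tail_sqr_moment mu f (quarter_root y)))
  + (quarter_root y)^-1.

Lemma tail_sqr_moment_quarter_root_cvg0 :
  tail_sqr_moment mu f (quarter_root y) @[y --> +oo] --> 0.
Proof.
exact: cvg_comp _ _ (@quarter_root_cvgy R) (tail_sqr_moment_cvg0 mf fin_sqr).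
Qed.

Lemma threshold_cvg0 : threshold y @[y --> +oo] --> 0.
Proof.
rewrite -[0]addr0; apply: cvgD; last first.
  apply/gtr0_cvgV0; last exact: quarter_root_cvgy.
  by near=> y; exact: quarter_root_gt0.
have := cvg_comp _ _ tail_sqr_moment_quarter_root_cvg0 (@sqrt_continuous R 0).
by move/(cvg_comp _ _)/(_ (@sqrt_continuous R _)); rewrite !sqrtr0.
Unshelve. all: by end_near. Qed.

Lemma threshold_nonincreasing x y : x <= y -> threshold y <= threshold x.
Proof.
move=> xy; apply: lerD.
  rewrite ler_sqrt ?sqrtr_ge0 // ler_sqrt ?tail_sqr_moment_ge0 //.
  exact/(le_tail_sqr_moment mf fin_sqr)/le_quarter_root.
by rewrite lef_pV2 ?le_quarter_root ?posrE ?quarter_root_gt0.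
Qed.

Lemma inv_quarter_root_le_threshold y : (quarter_root y)^-1 <= threshold y.
Proof. by rewrite lerDr sqrtr_ge0. Qed.

Lemma threshold_gt0 y : 0 < threshold y.
Proof.
apply: lt_le_trans (inv_quarter_root_le_threshold y).
by rewrite invr_gt0 quarter_root_gt0.
Qed.

Lemma sqrt_tail_le_sqr_threshold y :
  Num.sqrt (tail_sqr_moment mu f (quarter_root y)) <= threshold y ^+ 2.
Proof.
rewrite -[leLHS]sqr_sqrtr ?sqrtr_ge0 //.
rewrite lerXn2r ?nnegrE ?sqrtr_ge0 ?(ltW (threshold_gt0 y)) //.
by rewrite lerDl invr_ge0 ltW ?quarter_root_gt0.
Qed.

Lemma quarter_root_le_threshold_sqrt y :
  1 <= y -> quarter_root y <= threshold y * Num.sqrt y.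
Proof.
move=> y1; rewrite -sqr_quarter_root // expr2 mulrA.
rewrite ler_peMl ?(ltW (quarter_root_gt0 y)) //.
by rewrite -ler_pdivrMr ?quarter_root_gt0 // div1r inv_quarter_root_le_threshold.
Qed.

End threshold.

Section maximum.
Context d (T : measurableType d) (R : realType) (P : probability T R).
Context (U : {RV P >-> R}) (Us : nat -> {RV P >-> R}).
Hypothesis same_law : forall n, same_distribution U (Us n).

Lemma measurable_maxN N : measurable_fun setT (maxN Us N).
Proof.
rewrite /maxN; elim: (index_enum 'I_N) => [|i s IH].
  by under eq_fun do rewrite big_nil; exact: measurable_cst.
by under eq_fun do rewrite big_cons; exact: measurable_maxr.
Qed.

Lemma maxN_tail_le N c : 0 <= c ->
  fine (P [set t | c < maxN Us N t]) <= N%:R * fine (P [set t | c < U t]).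
Proof.
move=> c0; have mUs k : measurable [set t | c < Us k t].
  exact/measurable_gt_fun/measurable_funP.
have lawUs k : P [set t | c < Us k t] = P [set t | c < U t].
  by rewrite -!preimage_itvoy; apply: same_law; exact: measurable_itv.
have union_bound : (P [set t | (c < maxN Us N t)%R] <=
    \sum_(k < N) P [set t | (c < Us k t)%R])%E.
  apply: (@content_subadditive _ _ _ P _ (fun k => [set t | (c < Us k t)%R]) N)
    => //; first exact/measurable_gt_fun/measurable_maxN.
  move=> t /= ct; rewrite -(bigcup_mkord N (fun k => [set t | (c < Us k t)%R])).
  apply: contrapT => not_exceeded; move: ct; apply/negP; rewrite -leNgt.
  apply: bigmax_le => // i _; rewrite leNgt; apply/negP => ci.
  by apply: not_exceeded; exists i => //=.
have finU : P [set t | c < U t] \is a fin_num.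
  exact/fin_num_measure/measurable_gt_fun/measurable_funP.
move: union_bound; under eq_bigr => k _ do rewrite lawUs -(fineK finU).
rewrite sumEFin sumr_const card_ord mulr_natl -lee_fin fineK //.
exact/fin_num_measure/measurable_gt_fun/measurable_maxN.
Qed.

Hypothesis fin_sqr : (\int[P]_t (U t ^+ 2)%:E < +oo)%E.
Let mU : measurable_fun setT U := measurable_funP U.

Lemma maxN_exceeds_threshold_le N : (0 < N)%N ->
  fine (P [set t | threshold P U N%:R * Num.sqrt N%:R < maxN Us N t])
    <= Num.sqrt (tail_sqr_moment P U (quarter_root N%:R)).
Proof.
move=> N0; set n : R := N%:R; set c := threshold P U n * Num.sqrt n.
set H := tail_sqr_moment P U (quarter_root n).
have n1 : 1 <= n by rewrite ler1n.
have n0 : 0 < n := lt_le_trans ltr01 n1.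
have eta0 := threshold_gt0 P U n.
have c0 : 0 < c by rewrite mulr_gt0 ?sqrtr_gt0.
have finU : P [set t | c < U t] \is a fin_num.
  exact/fin_num_measure/measurable_gt_fun.
have markov : c ^+ 2 * fine (P [set t | c < U t]) <= H.
  apply: le_trans (tail_sqr_moment_markov mU fin_sqr (ltW c0) finU) _.
  exact/(le_tail_sqr_moment mU fin_sqr)/quarter_root_le_threshold_sqrt.
apply: le_trans (maxN_tail_le N (ltW c0)) _.
apply: le_trans (div_le_sqrt (tail_sqr_moment_ge0 _ _ _) (exprn_gt0 2 eta0)
  (sqrt_tail_le_sqr_threshold P U n)).
rewrite ler_pdivlMr ?exprn_gt0 //; apply: le_trans markov.
rewrite /c exprMn sqr_sqrtr ?(ltW n0) //.
by rewrite le_eqVlt; apply/orP; left; apply/eqP; ring.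
Qed.

Lemma maxN_exceeds_threshold_cvg0 :
  P [set t | threshold P U N%:R * Num.sqrt N%:R < maxN Us N t]
    @[N --> \oo] --> 0%E.
Proof.
apply: cvg_EFin.
  by apply: nearW => N; exact/fin_num_measure/measurable_gt_fun/measurable_maxN.
have bound_cvg0 :
    Num.sqrt (tail_sqr_moment P U (quarter_root N%:R)) @[N --> \oo] --> 0.
  have := cvg_comp _ _ (@cvgr_idn R)
    (tail_sqr_moment_quarter_root_cvg0 mU fin_sqr).
  by move/(cvg_comp _ _)/(_ (@sqrt_continuous R 0)); rewrite sqrtr0.
apply: (squeeze_cvgr _ (cvg_cst 0) bound_cvg0).
near=> N; rewrite fine_ge0 ?measure_ge0 //=; apply: maxN_exceeds_threshold_le.
by near: N; exists 1%N.
Unshelve. all: by end_near. Qed.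

End maximum.

Theorem lemma3 (d : measure_display) (T : measurableType d) (R : realType)
  (P : probability T R) (U : {RV P >-> R}) (Us : nat -> {RV P >-> R})
  (beta x0 : R) :
  mutually_independent Us ->
  (forall n, same_distribution U (Us n)) ->
  {ae P, forall t, (0 < U t)%R} ->
  ('E_P[fun t => (U t ^+ 2)%R] < +oo)%E ->
  0 < beta < 1 / 2 ->
  0 < x0 ->
  interior (support_of U) x0 ->
  convex_on `[x0, +oo[ (fun x => tailQ U x `^ (1 / 2 - beta)) ->
  exists eta : R -> R,
    {in `[0, +oo[ &, {homo eta : x y /~ x <= y}} /\
    eta y @[y --> +oo] --> 0 /\
    P [set t | maxN Us N t / Num.sqrt N%:R <= eta N%:R] @[N --> \oo] --> 1%E.
Proof.
move=> _ same_law _ EU _ _ _ _.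
have fin_sqr : (\int[P]_t (U t ^+ 2)%:E < +oo)%E by move: EU; rewrite unlock.
have mU : measurable_fun setT U := measurable_funP U.
exists (threshold P U); split.
  by move=> x y _ _; exact: threshold_nonincreasing.
split; first exact: threshold_cvg0.
pose exceeds N := [set t | threshold P U N%:R * Num.sqrt N%:R < maxN Us N t].
have below_complement N : (0 < N)%N ->
    [set t | maxN Us N t / Num.sqrt N%:R <= threshold P U N%:R] = ~` exceeds N.
  move=> N0; apply/seteqP; split => t /=;
  by rewrite ler_pdivrMr ?sqrtr_gt0 ?ltr0n // leNgt => /negP.
apply: cvg_trans (_ : (1 - P (exceeds N))%E @[N --> \oo] --> 1%E).
  apply: near_eq_cvg; near=> N; rewrite below_complement ?probability_setC //.
    exact/measurable_gt_fun/measurable_maxN.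
  by near: N; exists 1%N.
have := cvgeB _ (cvg_cst 1%E) (maxN_exceeds_threshold_cvg0 same_law fin_sqr).
by rewrite sube0; apply.
Unshelve. all: by end_near. Qed.
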